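(* Let $\psi:[t_0,\infty)\to(0,\infty)$ be continuous and non-increasing, such that $t\mapsto t\psi(t)$ is non-decreasing and $t\psi(t)<1$ for all $t\ge t_0$. Then there exists a unique continuous non-increasing function $r:[s_0,\infty)\to(0,\infty)$, where $s_0=\frac12\log t_0-\frac12\log\psi(t_0)$, such that $s\mapsto s+r(s)$ is non-decreasing and $$\psi(e^{s-r(s)})=e^{-s-r(s)}\quad\text{for all } s\ge s_0.$$ Conversely, given a continuous non-increasing function $r:[s_0,\infty)\to(0,\infty)$ such that $s\mapsto s+r(s)$ is non-decreasing, there exists a unique continuous non-increasing function $\psi:[t_0,\infty)\to(0,\infty)$ with $t_0=e^{s_0-r(s_0)}$ such that $t\mapsto t\psi(t)$ is non-decreasing, $t\psi(t)<1$ for all $t\ge t_0$, and $\psi(e^{s-r(s)})=e^{-s-r(s)}$ for all $s\ge s_0$. Furthermore, for such corresponding $\psi$ and $r$, if $\lim_{t\to\infty}t\psi(t)=1$ (equivalently $\lim_{s\to\infty}r(s)=0$), then the series $$\sum_n\frac{-(1-n\psi(n))\log(1-n\psi(n))}{n}$$ diverges if and only if the series $\sum_n r(n)\log\big(\frac{1}{r(n)}\big)$ diverges. *)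

From Stdlib Require Import Reals.
From Coquelicot Require Import Coquelicot.
Open Scope R_scope.

Definition cont_from (a : R) (f : R -> R) : Prop :=
  forall x, a <= x -> forall eps, 0 < eps ->
    exists delta, 0 < delta /\
      forall y, a <= y -> Rabs (y - x) < delta -> Rabs (f y - f x) < eps.

Definition nonincr_from (a : R) (f : R -> R) : Prop :=
  forall x y, a <= x -> x <= y -> f y <= f x.

Definition nondecr_from (a : R) (f : R -> R) : Prop :=
  forall x y, a <= x -> x <= y -> f x <= f y.

Definition pos_from (a : R) (f : R -> R) : Prop :=
  forall x, a <= x -> 0 < f x.

Definition psi_adm (t0 : R) (psi : R -> R) : Prop :=
  cont_from t0 psi /\ pos_from t0 psi /\ nonincr_from t0 psi /\
  nondecr_from t0 (fun t => t * psi t) /\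
  (forall t, t0 <= t -> t * psi t < 1).

Definition r_adm (s0 : R) (r : R -> R) : Prop :=
  cont_from s0 r /\ pos_from s0 r /\ nonincr_from s0 r /\
  nondecr_from s0 (fun s => s + r s).

Definition corresp (psi r : R -> R) (s0 : R) : Prop :=
  forall s, s0 <= s -> psi (exp (s - r s)) = exp (- s - r s).

Definition psi_term (psi : R -> R) (n : nat) : R :=
  - (1 - INR n * psi (INR n)) * ln (1 - INR n * psi (INR n)) / INR n.

Definition r_term (r : R -> R) (n : nat) : R :=
  r (INR n) * ln (1 / r (INR n)).

From Stdlib Require Import Reals Lra Lia ZArith IndefiniteDescription.
From Coquelicot Require Import Coquelicot.
Open Scope R_scope.

(* Write t = e^(s - r(s)).  The correspondence psi(t) = e^(-s - r(s)) says exactly that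
   s = (ln t - ln psi(t)) / 2 and t psi(t) = e^(-2 r(s)).  The hypotheses on psi make
   t |-> (ln t - ln psi(t)) / 2 a continuous increasing bijection of [t0, oo) onto [s0, oo), and
   those on r make s |-> e^(s - r(s)) one of [s0, oo) onto [t0, oo); either function is therefore
   recovered from the other through the inverse bijection, and t psi(t) -> 1 iff r -> 0.
   Once r <= 1/8, the number 1 - e^(-2 r(s)) lies between r(s) and 2 r(s), where x |-> -x ln x is
   increasing and at most doubles when x doubles; so the n-th term of the first series is
   comparable to -r(s) ln r(s) / n for n = e^(s - r(s)).  The integers of
   (e^(k - r(k)), e^(k + 1 - r(k + 1))] form a block whose length is comparable to its elements,
   because the ratio of the endpoints lies in [2, 9]; the block sums of the first series are thus
   squeezed between multiples of consecutive terms r(k) ln(1/r(k)) of the second. *)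

(** * Continuity and inverses on half-lines *)

Lemma continuity_pt_exp x : continuity_pt exp x.
Proof. apply derivable_continuous_pt, derivable_pt_exp. Qed.

Lemma continuity_pt_ln x : 0 < x -> continuity_pt ln x.
Proof.
  intros Hx. apply derivable_continuous_pt. exists (/ x). now apply derivable_pt_lim_ln.
Qed.

Lemma exp_le x y : x <= y -> exp x <= exp y.
Proof. intros [H | ->]; [left; now apply exp_increasing | lra]. Qed.

Lemma cont_from_id a : cont_from a (fun x => x).
Proof. intros x _ eps Heps. exists eps; auto. Qed.

Lemma cont_from_comp a b h f :
  cont_from a h -> (forall x, a <= x -> b <= h x) -> cont_from b f ->
  cont_from a (fun x => f (h x)).
Proof.
  intros Hh Hb Hf x Hx eps Heps.
  destruct (Hf (h x) (Hb x Hx) eps Heps) as [d [Hd Hfd]].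
  destruct (Hh x Hx d Hd) as [d' [Hd' Hhd']].
  exists d'; auto.
Qed.

Lemma cont_from_comp_pt a f g :
  cont_from a f -> (forall x, a <= x -> continuity_pt g (f x)) ->
  cont_from a (fun x => g (f x)).
Proof.
  intros Hf Hg x Hx eps Heps.
  destruct (Hg x Hx eps Heps) as [d [Hd Hgd]].
  destruct (Hf x Hx d Hd) as [d' [Hd' Hfd']].
  exists d'; split; [exact Hd'|]. intros y Hy Hyx.
  destruct (Req_dec (f y) (f x)) as [E|Hne].
  - rewrite E, Rminus_diag, Rabs_R0; exact Heps.
  - apply (Hgd (f y)). split; [split; [exact I | auto] | now apply Hfd'].
Qed.

Lemma cont_from_plus a f g :
  cont_from a f -> cont_from a g -> cont_from a (fun x => f x + g x).
Proof.
  intros Hf Hg x Hx eps Heps.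
  destruct (Hf x Hx (eps / 2)) as [d1 [Hd1 H1]]; [lra|].
  destruct (Hg x Hx (eps / 2)) as [d2 [Hd2 H2]]; [lra|].
  exists (Rmin d1 d2); split; [now apply Rmin_pos|].
  intros y Hy Hyx.
  specialize (H1 y Hy (Rlt_le_trans _ _ _ Hyx (Rmin_l _ _))).
  specialize (H2 y Hy (Rlt_le_trans _ _ _ Hyx (Rmin_r _ _))).
  replace (f y + g y - (f x + g x)) with ((f y - f x) + (g y - g x)) by ring.
  eapply Rle_lt_trans; [apply Rabs_triang | lra].
Qed.

Lemma cont_from_opp a f : cont_from a f -> cont_from a (fun x => - f x).
Proof. intros Hf. apply (cont_from_comp_pt a f Ropp Hf). intros; reg. Qed.

Lemma cont_from_minus a f g :
  cont_from a f -> cont_from a g -> cont_from a (fun x => f x - g x).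
Proof. intros Hf Hg. now apply cont_from_plus, cont_from_opp. Qed.

Lemma cont_from_scal a c f : cont_from a f -> cont_from a (fun x => c * f x).
Proof. intros Hf. apply (cont_from_comp_pt a f (fun y => c * y) Hf). intros; reg. Qed.

Lemma cont_from_exp a f : cont_from a f -> cont_from a (fun x => exp (f x)).
Proof. intros Hf. apply (cont_from_comp_pt a f exp Hf). intros; apply continuity_pt_exp. Qed.

Lemma cont_from_ln a f : cont_from a f -> pos_from a f -> cont_from a (fun x => ln (f x)).
Proof.
  intros Hf Hpos. apply (cont_from_comp_pt a f ln Hf).
  intros x Hx. now apply continuity_pt_ln, Hpos.
Qed.

Definition sincr_from (a : R) (F : R -> R) : Prop :=
  forall x y, a <= x -> x < y -> F x < F y.

Definition unbounded_from (a : R) (F : R -> R) : Prop :=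
  forall M, exists x, a <= x /\ M <= F x.

Lemma sincr_from_nondecr a F : sincr_from a F -> nondecr_from a F.
Proof.
  intros HF x y Hx Hxy. destruct (Req_dec x y) as [<-|Hne]; [lra|].
  left; apply HF; lra.
Qed.

Lemma sincr_from_le_inv a F x y :
  sincr_from a F -> a <= x -> a <= y -> F x <= F y -> x <= y.
Proof.
  intros HF Hx Hy Hle. destruct (Rle_lt_dec x y) as [h|h]; [exact h|].
  specialize (HF y x Hy h). lra.
Qed.

Lemma sincr_from_inj a F x y :
  sincr_from a F -> a <= x -> a <= y -> F x = F y -> x = y.
Proof.
  intros HF Hx Hy E.
  apply Rle_antisym; apply (sincr_from_le_inv a F); auto; lra.
Qed.

Lemma cont_from_surj a F :
  cont_from a F -> unbounded_from a F ->
  forall y, F a <= y -> exists x, a <= x /\ F x = y.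
Proof.
  intros Hc Hu y Hy.
  destruct (Req_dec (F a) y) as [E|Hne]; [exists a; split; [lra | exact E]|].
  destruct (Hu (y + 1)) as [b [Hb Hby]].
  assert (Hab : a < b) by (destruct Hb as [Hb|<-]; lra).
  (* [IVT_interv] wants continuity on all of [R]: extend [F] by [F a] to the left of [a] *)
  set (G := fun x => F (Rmax a x) - y).
  assert (HG : forall x, continuity_pt G x).
  { intros x eps Heps.
    destruct (Hc (Rmax a x) (Rmax_l _ _) eps Heps) as [d [Hd Hcd]].
    exists d; split; [exact Hd|]. intros z [_ Hz]. simpl in *. unfold R_dist, G in *.
    replace (F (Rmax a z) - y - (F (Rmax a x) - y)) with (F (Rmax a z) - F (Rmax a x)) by ring.
    apply Hcd; [apply Rmax_l|].
    unfold Rmax; destruct (Rle_dec a z), (Rle_dec a x);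
      apply Rabs_def1; apply Rabs_def2 in Hz; lra. }
  destruct (Ranalysis5.IVT_interv G a b (fun z _ => HG z) Hab) as [x [Hx Gx]];
    unfold G; rewrite ?Rmax_left, ?Rmax_right by lra; try lra.
  exists x; split; [lra|]. unfold G in Gx. rewrite Rmax_right in Gx by lra. lra.
Qed.

Section Inverse.

Variables (a : R) (F G : R -> R).
Hypothesis F_sincr : sincr_from a F.
Hypothesis G_section : forall y, F a <= y -> a <= G y /\ F (G y) = y.

Lemma inverse_nondecr : nondecr_from (F a) G.
Proof.
  intros y z Hy Hyz. destruct (G_section y Hy) as [Gy Ey].
  destruct (G_section z ltac:(lra)) as [Gz Ez].
  apply (sincr_from_le_inv a F); auto. lra.
Qed.

Lemma inverse_retraction x : a <= x -> G (F x) = x.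
Proof.
  intros Hx. assert (HFx : F a <= F x) by now apply (sincr_from_nondecr a F).
  destruct (G_section (F x) HFx) as [Ga E].
  now apply (sincr_from_inj a F).
Qed.

Lemma inverse_cont : cont_from (F a) G.
Proof.
  intros y Hy eps Heps. destruct (G_section y Hy) as [Ga Ey].
  set (x := G y) in *.
  assert (F_mono := sincr_from_nondecr a F F_sincr).
  assert (Hup : y < F (x + eps)) by (rewrite <- Ey; apply F_sincr; lra).
  assert (Hlo : exists d, 0 < d /\
            forall z, F a <= z -> y - d < z -> x - eps < G z).
  { destruct (Rle_lt_dec a (x - eps)) as [Hin|Hout].
    - exists (y - F (x - eps)). split; [rewrite <- Ey; apply Rlt_0_minus, F_sincr; lra|].
      intros z Hz Hzy. destruct (G_section z Hz) as [Gz Ez].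
      destruct (Rlt_le_dec (x - eps) (G z)) as [h|h]; [exact h|].
      assert (F (G z) <= F (x - eps)) by now apply F_mono. lra.
    - exists 1. split; [lra|]. intros z Hz _. destruct (G_section z Hz). lra. }
  destruct Hlo as [d [Hd Hlo]].
  exists (Rmin (F (x + eps) - y) d). split; [apply Rmin_pos; lra|].
  intros z Hz Hzy. apply Rabs_def2 in Hzy.
  assert (Hd1 := Rmin_l (F (x + eps) - y) d). assert (Hd2 := Rmin_r (F (x + eps) - y) d).
  destruct (G_section z Hz) as [Gz Ez].
  assert (G z < x + eps).
  { destruct (Rlt_le_dec (G z) (x + eps)) as [h|h]; [exact h|].
    assert (F (x + eps) <= F (G z)) by (apply F_mono; lra). lra. }
  assert (x - eps < G z) by (apply Hlo; lra).
  apply Rabs_def1; lra.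
Qed.

End Inverse.

Lemma inverse_from a F :
  cont_from a F -> sincr_from a F -> unbounded_from a F ->
  exists G, (forall y, F a <= y -> a <= G y /\ F (G y) = y) /\
            (forall x, a <= x -> G (F x) = x) /\
            cont_from (F a) G /\ nondecr_from (F a) G.
Proof.
  intros Hc Hs Hu.
  assert (Hpre : forall y, exists x, F a <= y -> a <= x /\ F x = y).
  { intros y. destruct (Rle_dec (F a) y) as [h|h].
    - destruct (cont_from_surj a F Hc Hu y h) as [x Hx]. exists x; auto.
    - exists a. intros; lra. }
  destruct (functional_choice _ Hpre) as [G HG].
  exists G. repeat split.
  - now apply HG.
  - now apply HG.
  - now apply (inverse_retraction a F G).
  - now apply (inverse_cont a F G).
  - now apply (inverse_nondecr a F G).
Qed.

(** * The correspondence between psi and r *)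

Definition s_of (psi : R -> R) (t : R) : R := / 2 * ln t - / 2 * ln (psi t).

Definition t_of (r : R -> R) (s : R) : R := exp (s - r s).

Lemma s_of_t_of psi r s0 s :
  corresp psi r s0 -> s0 <= s -> s_of psi (t_of r s) = s.
Proof. intros Hc Hs. unfold s_of, t_of. rewrite Hc, !ln_exp by exact Hs. field. Qed.

Lemma tpsi_t_of psi r s0 s :
  corresp psi r s0 -> s0 <= s -> t_of r s * psi (t_of r s) = exp (- 2 * r s).
Proof. intros Hc Hs. unfold t_of. rewrite Hc, <- exp_plus by exact Hs. f_equal; ring. Qed.

Section TOf.

Variables (s0 : R) (r : R -> R).
Hypothesis r_cont : cont_from s0 r.
Hypothesis r_nonincr : nonincr_from s0 r.

Lemma sub_r_sincr : sincr_from s0 (fun s => s - r s).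
Proof. intros x y Hx Hxy. assert (r y <= r x) by (apply r_nonincr; lra). lra. Qed.

Lemma sub_r_unbounded : unbounded_from s0 (fun s => s - r s).
Proof.
  intros M. exists (Rmax s0 (M + r s0)). split; [apply Rmax_l|].
  assert (r (Rmax s0 (M + r s0)) <= r s0) by (apply r_nonincr; [lra | apply Rmax_l]).
  assert (M + r s0 <= Rmax s0 (M + r s0)) by apply Rmax_r. lra.
Qed.

Lemma sub_r_cont : cont_from s0 (fun s => s - r s).
Proof. apply cont_from_minus; [apply cont_from_id | exact r_cont]. Qed.

Lemma t_of_sincr : sincr_from s0 (t_of r).
Proof. intros x y Hx Hxy. now apply exp_increasing, sub_r_sincr. Qed.

Lemma t_of_cont : cont_from s0 (t_of r).
Proof. exact (cont_from_exp s0 _ sub_r_cont). Qed.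

Lemma t_of_unbounded : unbounded_from s0 (t_of r).
Proof.
  intros M. destruct (sub_r_unbounded M) as [x [Hx HM]]. exists x. split; [exact Hx|].
  assert (H := exp_ineq1_le (x - r x)). unfold t_of. lra.
Qed.

Lemma t_of_surj t : t_of r s0 <= t -> exists s, s0 <= s /\ t_of r s = t.
Proof. apply cont_from_surj; [exact t_of_cont | exact t_of_unbounded]. Qed.

Lemma t_of_ge s : s0 <= s -> t_of r s0 <= t_of r s.
Proof. intros Hs. apply (sincr_from_nondecr s0 _ t_of_sincr); lra. Qed.

End TOf.

Section PsiDeterminesR.

Variables (t0 : R) (psi : R -> R).
Hypothesis t0_pos : 0 < t0.
Hypothesis psi_cont : cont_from t0 psi.
Hypothesis psi_pos : pos_from t0 psi.
Hypothesis psi_nonincr : nonincr_from t0 psi.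
Hypothesis tpsi_nondecr : nondecr_from t0 (fun t => t * psi t).
Hypothesis tpsi_lt1 : forall t, t0 <= t -> t * psi t < 1.

Lemma s_of_cont : cont_from t0 (s_of psi).
Proof.
  apply cont_from_minus; apply cont_from_scal; apply cont_from_ln; auto using cont_from_id.
  intros t Ht; lra.
Qed.

Lemma s_of_sincr : sincr_from t0 (s_of psi).
Proof.
  intros x y Hx Hxy. unfold s_of.
  assert (ln x < ln y) by (apply ln_increasing; lra).
  assert (ln (psi y) <= ln (psi x)) by (apply ln_le; [apply psi_pos | apply psi_nonincr]; lra).
  lra.
Qed.

Lemma s_of_unbounded : unbounded_from t0 (s_of psi).
Proof.
  intros M. set (t := Rmax t0 (exp (2 * M + ln (psi t0)))).
  exists t. split; [apply Rmax_l|]. unfold s_of.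
  assert (Ht : t0 <= t) by apply Rmax_l.
  assert (2 * M + ln (psi t0) <= ln t).
  { rewrite <- (ln_exp (2 * M + ln (psi t0))). apply ln_le; [apply exp_pos | apply Rmax_r]. }
  assert (ln (psi t) <= ln (psi t0)) by (apply ln_le; [apply psi_pos | apply psi_nonincr]; lra).
  lra.
Qed.

Let s0 := s_of psi t0.

Lemma psi_determines_r_exists : exists r, r_adm s0 r /\ corresp psi r s0.
Proof.
  destruct (inverse_from t0 (s_of psi) s_of_cont s_of_sincr s_of_unbounded)
    as [G [HG [_ [G_cont G_nondecr]]]].
  fold s0 in HG, G_cont, G_nondecr.
  assert (G_pos : pos_from s0 G) by (intros s Hs; destruct (HG s Hs); lra).
  assert (tpsi_G_pos : forall s, s0 <= s -> 0 < G s * psi (G s)).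
  { intros s Hs. destruct (HG s Hs). apply Rmult_lt_0_compat; [lra | apply psi_pos; lra]. }
  assert (Hr : forall s, s0 <= s ->
            s - ln (G s) = - / 2 * ln (G s * psi (G s)) /\
            s + (s - ln (G s)) = - ln (psi (G s))).
  { intros s Hs. destruct (HG s Hs) as [Gs Es]. unfold s_of in Es.
    rewrite ln_mult by (auto; apply psi_pos; lra). split; lra. }
  exists (fun s => s - ln (G s)). split; [repeat split|].
  - apply cont_from_minus; [apply cont_from_id | now apply cont_from_ln].
  - intros s Hs. rewrite (proj1 (Hr s Hs)). destruct (HG s Hs) as [Gs _].
    assert (ln (G s * psi (G s)) < 0).
    { rewrite <- ln_1. apply ln_increasing, tpsi_lt1; auto. }
    lra.
  - intros x y Hx Hxy. rewrite (proj1 (Hr x Hx)), (proj1 (Hr y ltac:(lra))).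
    destruct (HG x Hx) as [Gx _].
    assert (ln (G x * psi (G x)) <= ln (G y * psi (G y))).
    { apply ln_le; [now apply tpsi_G_pos | apply tpsi_nondecr; [lra | now apply G_nondecr]]. }
    lra.
  - intros x y Hx Hxy. rewrite (proj2 (Hr x Hx)), (proj2 (Hr y ltac:(lra))).
    destruct (HG x Hx) as [Gx _].
    assert (G x <= G y) by now apply G_nondecr.
    assert (ln (psi (G y)) <= ln (psi (G x))) by (apply ln_le; [apply psi_pos | apply psi_nonincr]; lra).
    lra.
  - intros s Hs. replace (s - (s - ln (G s))) with (ln (G s)) by ring.
    rewrite exp_ln by now apply G_pos.
    destruct (HG s Hs) as [Gs _].
    rewrite <- (exp_ln (psi (G s))) by (apply psi_pos; lra).
    f_equal. destruct (Hr s Hs). lra.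
Qed.

Lemma t_of_ge_t0 r : r_adm s0 r -> corresp psi r s0 ->
  forall s, s0 <= s -> t0 <= t_of r s.
Proof.
  intros (r_cont & _ & r_nonincr & _) Hc s Hs.
  apply Rle_trans with (t_of r s0); [|now apply t_of_ge].
  destruct (Rle_lt_dec t0 (t_of r s0)) as [h|h]; [exact h|].
  (* otherwise [t0 = t_of r s2] for some [s2 >= s0], whence [s2 = s_of psi t0 = s0] *)
  destruct (t_of_surj s0 r r_cont r_nonincr t0 (Rlt_le _ _ h)) as [s2 [Hs2 E]].
  assert (E2 : s_of psi t0 = s2) by (rewrite <- E; now apply (s_of_t_of psi r s0)).
  fold s0 in E2. subst s2. lra.
Qed.

Lemma corresp_unique_r r1 r2 :
  r_adm s0 r1 -> corresp psi r1 s0 -> r_adm s0 r2 -> corresp psi r2 s0 ->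
  forall s, s0 <= s -> r1 s = r2 s.
Proof.
  intros H1 C1 H2 C2 s Hs.
  assert (E : t_of r1 s = t_of r2 s).
  { apply (sincr_from_inj t0 (s_of psi) _ _ s_of_sincr);
      [now apply t_of_ge_t0 .. |].
    now rewrite (s_of_t_of psi r1 s0), (s_of_t_of psi r2 s0). }
  apply exp_inv in E. lra.
Qed.

End PsiDeterminesR.

Section RDeterminesPsi.

Variables (s0 : R) (r : R -> R).
Hypothesis r_cont : cont_from s0 r.
Hypothesis r_pos : pos_from s0 r.
Hypothesis r_nonincr : nonincr_from s0 r.
Hypothesis s_add_r_nondecr : nondecr_from s0 (fun s => s + r s).

Let t0 := t_of r s0.

Lemma corresp_unique_psi psi1 psi2 :
  corresp psi1 r s0 -> corresp psi2 r s0 -> forall t, t0 <= t -> psi1 t = psi2 t.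
Proof.
  intros C1 C2 t Ht. destruct (t_of_surj s0 r r_cont r_nonincr t Ht) as [s [Hs <-]].
  unfold t_of. now rewrite C1, C2.
Qed.

Lemma r_determines_psi_exists : exists psi, psi_adm t0 psi /\ corresp psi r s0.
Proof.
  destruct (inverse_from s0 (t_of r) (t_of_cont s0 r r_cont) (t_of_sincr s0 r r_nonincr)
              (t_of_unbounded s0 r r_nonincr))
    as [S [HS [S_retr [S_cont S_nondecr]]]].
  fold t0 in HS, S_cont, S_nondecr.
  set (psi := fun t => exp (- S t - r (S t))).
  assert (Hc : corresp psi r s0).
  { intros s Hs. unfold psi. fold (t_of r s). now rewrite S_retr. }
  assert (tpsi : forall t, t0 <= t -> t * psi t = exp (- 2 * r (S t))).
  { intros t Ht. destruct (HS t Ht) as [St Et].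
    rewrite <- Et at 1 2. now apply (tpsi_t_of psi r s0). }
  exists psi. split; [repeat split | exact Hc].
  - apply cont_from_exp, cont_from_minus; [now apply cont_from_opp|].
    apply (cont_from_comp t0 s0); auto. intros t Ht; now apply HS.
  - intros t _. apply exp_pos.
  - intros x y Hx Hxy. destruct (HS x Hx) as [Sx _].
    assert (S x <= S y) by now apply S_nondecr.
    assert (S x + r (S x) <= S y + r (S y)) by now apply s_add_r_nondecr.
    apply exp_le. lra.
  - intros x y Hx Hxy. cbv beta. rewrite !tpsi by lra.
    destruct (HS x Hx) as [Sx _].
    assert (r (S y) <= r (S x)) by (apply r_nonincr; [|apply S_nondecr]; lra).
    apply exp_le. lra.
  - intros t Ht. rewrite tpsi by exact Ht. rewrite <- exp_0. apply exp_increasing.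
    destruct (HS t Ht). assert (0 < r (S t)) by now apply r_pos. lra.
Qed.

End RDeterminesPsi.

Section Limits.

Variables (s0 : R) (psi r : R -> R).
Hypothesis r_cont : cont_from s0 r.
Hypothesis r_pos : pos_from s0 r.
Hypothesis r_nonincr : nonincr_from s0 r.
Hypothesis Hc : corresp psi r s0.

Lemma lim_r_of_lim_tpsi :
  is_lim (fun t => t * psi t) p_infty 1 -> is_lim r p_infty 0.
Proof.
  intros H. apply is_lim_spec in H. apply is_lim_spec. intros eps. simpl in *.
  assert (Heps := cond_pos eps).
  assert (Heta : 0 < 1 - exp (-2 * eps)).
  { assert (exp (-2 * eps) < exp 0) by (apply exp_increasing; lra).
    rewrite exp_0 in *. lra. }
  destruct (H (mkposreal _ Heta)) as [M HM]. simpl in HM.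
  destruct (sub_r_unbounded s0 r r_nonincr (M + 1)) as [s1 [Hs1 HM1]]. cbv beta in HM1.
  exists s1. intros s Hs.
  assert (s1 - r s1 <= s - r s)
    by (apply (sincr_from_nondecr s0 _ (sub_r_sincr s0 r r_nonincr)); lra).
  assert (HMt : M < t_of r s) by (assert (E := exp_ineq1_le (s - r s)); unfold t_of; lra).
  specialize (HM (t_of r s) HMt). rewrite (tpsi_t_of psi r s0 s Hc) in HM by lra.
  apply Rabs_def2 in HM. destruct HM as [_ HM].
  assert (Hexp : exp (-2 * eps) < exp (- 2 * r s)) by lra.
  apply exp_lt_inv in Hexp.
  assert (0 < r s) by (apply r_pos; lra).
  rewrite Rminus_0_r, Rabs_right; lra.
Qed.

Lemma lim_tpsi_of_lim_r :
  is_lim r p_infty 0 -> is_lim (fun t => t * psi t) p_infty 1.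
Proof.
  intros H. apply is_lim_spec in H. apply is_lim_spec. intros eps. simpl in *.
  assert (Heps := cond_pos eps).
  destruct (H (mkposreal (eps / 2) ltac:(lra))) as [M HM]. simpl in HM.
  exists (Rmax (t_of r s0) (exp M)). intros t Ht.
  assert (Ht0 := Rmax_l (t_of r s0) (exp M)). assert (HtM := Rmax_r (t_of r s0) (exp M)).
  destruct (t_of_surj s0 r r_cont r_nonincr t ltac:(lra)) as [s [Hs <-]].
  rewrite (tpsi_t_of psi r s0 s Hc Hs).
  assert (M < s - r s) by (apply exp_lt_inv; unfold t_of in *; lra).
  assert (0 < r s) by now apply r_pos.
  specialize (HM s ltac:(lra)). rewrite Rminus_0_r in HM. apply Rabs_def2 in HM.
  assert (exp (- 2 * r s) < 1) by (rewrite <- exp_0; apply exp_increasing; lra).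
  assert (Hlin := exp_ineq1_le (- 2 * r s)).
  apply Rabs_def1; lra.
Qed.

End Limits.

(** * Comparison of the two series *)

Fixpoint psum (a : nat -> R) (n : nat) : R :=
  match n with O => 0 | S n => psum a n + a n end.

Lemma sum_n_psum a N : sum_n a N = psum a (S N).
Proof.
  induction N as [|N IH]; [rewrite sum_O; symmetry; apply Rplus_0_l|].
  rewrite sum_Sn, IH. reflexivity.
Qed.

Lemma psum_diff_ge a lo p q : (p <= q)%nat ->
  (forall n, (p <= n < q)%nat -> lo <= a n) -> INR (q - p) * lo <= psum a q - psum a p.
Proof.
  intros Hpq Ha. induction q as [|q IH].
  - replace p with 0%nat by lia. simpl. lra.
  - destruct (Nat.eq_dec p (S q)) as [->|Hne]; [rewrite Nat.sub_diag; simpl; lra|].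
    rewrite Nat.sub_succ_l, S_INR by lia. simpl psum.
    assert (lo <= a q) by (apply Ha; lia).
    specialize (IH ltac:(lia) (fun n Hn => Ha n ltac:(lia))). lra.
Qed.

Lemma psum_diff_le a hi p q : (p <= q)%nat ->
  (forall n, (p <= n < q)%nat -> a n <= hi) -> psum a q - psum a p <= INR (q - p) * hi.
Proof.
  intros Hpq Ha. induction q as [|q IH].
  - replace p with 0%nat by lia. simpl. lra.
  - destruct (Nat.eq_dec p (S q)) as [->|Hne]; [rewrite Nat.sub_diag; simpl; lra|].
    rewrite Nat.sub_succ_l, S_INR by lia. simpl psum.
    assert (a q <= hi) by (apply Ha; lia).
    specialize (IH ltac:(lia) (fun n Hn => Ha n ltac:(lia))). lra.
Qed.

Lemma psum_le a p q : (p <= q)%nat -> (forall n, (p <= n)%nat -> 0 <= a n) ->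
  psum a p <= psum a q.
Proof.
  intros Hpq Ha. assert (H := psum_diff_ge a 0 p q Hpq (fun n Hn => Ha n ltac:(lia))). lra.
Qed.

Lemma ex_series_iff_bounded a N0 : (forall n, (N0 <= n)%nat -> 0 <= a n) ->
  (ex_series a <-> exists N1 B, forall N, (N1 <= N)%nat -> psum a N <= B).
Proof.
  intros Ha. split.
  - intros [l Hl]. assert (Hl' : is_lim_seq (sum_n a) l) by exact Hl.
    apply is_lim_seq_spec in Hl'. destruct (Hl' (mkposreal 1 Rlt_0_1)) as [N HN].
    exists (S N), (l + 1). intros [|M] HM; [lia|].
    rewrite <- sum_n_psum. specialize (HN M ltac:(lia)). simpl in HN.
    apply Rabs_def2 in HN. lra.
  - intros [N1 [B HB]]. set (M := Nat.max N0 N1).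
    assert (Hf : ex_finite_lim_seq (fun n => psum a (n + M))).
    { apply (ex_finite_lim_seq_incr _ B).
      - intros n. simpl. assert (0 <= a (n + M)%nat) by (apply Ha; lia). lra.
      - intros n. apply HB. lia. }
    destruct Hf as [l Hl]. exists l.
    apply is_lim_seq_incr_n, is_lim_seq_incr_1 in Hl.
    apply (is_lim_seq_ext _ _ l (fun N => eq_sym (sum_n_psum a N)) Hl).
Qed.

Lemma telescope_bounds (A b : nat -> R) (K0 : nat) (c C : R) :
  (forall k, (K0 <= k)%nat -> c * b (S k) <= A (S k) - A k <= C * b k) ->
  forall j, c * (psum b (S (K0 + j)) - psum b (S K0)) <= A (K0 + j)%nat - A K0 <=
            C * (psum b (K0 + j) - psum b K0).
Proof.
  intros H j. induction j as [|j IH]; [rewrite Nat.add_0_r; lra|].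
  rewrite Nat.add_succ_r. specialize (H (K0 + j)%nat ltac:(lia)).
  split.
  - change (psum b (S (S (K0 + j)))) with (psum b (S (K0 + j)) + b (S (K0 + j))). lra.
  - change (psum b (S (K0 + j))) with (psum b (K0 + j) + b (K0 + j)%nat). lra.
Qed.

Lemma ex_series_block_iff (a b : nat -> R) (m : nat -> nat) (K0 : nat) (c C : R) :
  0 < c -> 0 <= C ->
  (forall n, (m K0 <= n)%nat -> 0 <= a n) ->
  (forall k, (K0 <= k)%nat -> 0 <= b k) ->
  (forall k, (K0 <= k)%nat -> (m k < m (S k))%nat) ->
  (forall k, (K0 <= k)%nat ->
     c * b (S k) <= psum a (m (S k)) - psum a (m k) <= C * b k) ->
  (ex_series a <-> ex_series b).
Proof.
  intros Hc HC Ha Hb Hm Hblock.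
  assert (Htel := telescope_bounds (fun k => psum a (m k)) b K0 c C Hblock).
  assert (Hm_ge : forall j, (j <= m (K0 + j))%nat).
  { induction j as [|j IH]; [lia|]. specialize (Hm (K0 + j)%nat ltac:(lia)).
    rewrite Nat.add_succ_r. lia. }
  rewrite (ex_series_iff_bounded a (m K0) Ha), (ex_series_iff_bounded b K0 Hb).
  split; intros [N1 [B HB]].
  - exists (S (K0 + N1)), (psum b (S K0) + (B - psum a (m K0)) / c).
    intros N HN. replace N with (S (K0 + (N - S K0))) by lia.
    destruct (Htel (N - S K0)%nat) as [Hlo _].
    specialize (HB (m (K0 + (N - S K0)))%nat ltac:(specialize (Hm_ge (N - S K0)%nat); lia)).
    apply (Rmult_le_reg_l c); [exact Hc|].
    replace (c * (psum b (S K0) + (B - psum a (m K0)) / c))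
      with (c * psum b (S K0) + (B - psum a (m K0))) by (field; lra).
    lra.
  - exists (m K0), (psum a (m K0) + C * (B - psum b K0)).
    intros N HN. set (j := Nat.max N1 N).
    assert (Hj := Hm_ge j).
    assert (psum a N <= psum a (m (K0 + j)%nat))
      by (apply psum_le; [unfold j in *; lia | intros n Hn; apply Ha; lia]).
    destruct (Htel j) as [_ Hup].
    assert (psum b (K0 + j) <= B) by (apply HB; unfold j; lia).
    assert (C * psum b (K0 + j) <= C * B) by (apply Rmult_le_compat_l; lra).
    lra.
Qed.

Definition neg_xlnx (x : R) : R := - x * ln x.

Lemma ln_le_sub1 x : 0 < x -> ln x <= x - 1.
Proof.
  intros Hx. rewrite <- (ln_exp (x - 1)).
  apply ln_le; [exact Hx | assert (H := exp_ineq1_le (x - 1)); lra].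
Qed.

Lemma exp_neg1_ge : / 4 <= exp (-1).
Proof.
  assert (E : exp 1 * exp (-1) = 1) by (rewrite <- exp_plus, Rplus_opp_r; apply exp_0).
  assert (H3 := exp_le_3). assert (0 < exp (-1)) by apply exp_pos. nra.
Qed.

Lemma neg_xlnx_ge0 x : 0 < x -> x <= 1 -> 0 <= neg_xlnx x.
Proof.
  intros Hx Hx1. unfold neg_xlnx.
  assert (ln x <= 0) by (rewrite <- ln_1; apply ln_le; lra). nra.
Qed.

Lemma neg_xlnx_le x y : 0 < x -> x <= y -> y <= exp (-1) -> neg_xlnx x <= neg_xlnx y.
Proof.
  (* [y ln y - x ln x = (y - x) ln y + x ln (y / x) <= - (y - x) + (y - x)] *)
  intros Hx Hxy Hy. unfold neg_xlnx.
  assert (Hlny : ln y <= -1) by (rewrite <- (ln_exp (-1)); apply ln_le; lra).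
  assert (Hq : ln y - ln x <= y / x - 1).
  { replace (ln y - ln x) with (ln (y * / x))
      by (rewrite ln_mult, ln_Rinv; try apply Rinv_0_lt_compat; lra).
    apply ln_le_sub1, Rdiv_lt_0_compat; lra. }
  assert (H1 : x * (ln y - ln x) <= y - x).
  { replace (y - x) with (x * (y / x - 1)) by (field; lra).
    apply Rmult_le_compat_l; lra. }
  assert (H2 : (y - x) * (ln y + 1) <= 0) by (apply Rmult_le_0_l; lra).
  lra.
Qed.

Lemma neg_xlnx_double x : 0 < x -> neg_xlnx (2 * x) <= 2 * neg_xlnx x.
Proof.
  intros Hx. unfold neg_xlnx. rewrite ln_mult by lra.
  assert (0 < ln 2) by (rewrite <- ln_1; apply ln_increasing; lra). nra.
Qed.

Lemma one_sub_exp_bounds rho : 0 < rho <= / 2 ->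
  rho <= 1 - exp (- 2 * rho) <= 2 * rho.
Proof.
  intros Hrho. assert (Hlo := exp_ineq1_le (- 2 * rho)).
  assert (Hhi := exp_ineq1_le (2 * rho)).
  assert (E : exp (2 * rho) * exp (- 2 * rho) = 1)
    by (rewrite <- exp_plus; replace (2 * rho + - 2 * rho) with 0 by ring; apply exp_0).
  assert (0 < exp (- 2 * rho)) by apply exp_pos.
  split; nra.
Qed.

Lemma neg_xlnx_one_sub_exp rho : 0 < rho <= / 8 ->
  neg_xlnx rho <= neg_xlnx (1 - exp (- 2 * rho)) <= 2 * neg_xlnx rho.
Proof.
  intros Hrho. assert (E := exp_neg1_ge).
  destruct (one_sub_exp_bounds rho ltac:(lra)) as [Hlo Hhi].
  split; [apply neg_xlnx_le; lra|].
  apply Rle_trans with (neg_xlnx (2 * rho)); [apply neg_xlnx_le; lra|].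
  apply neg_xlnx_double; lra.
Qed.

Lemma r_term_neg_xlnx r k : 0 < r (INR k) -> r_term r k = neg_xlnx (r (INR k)).
Proof.
  intros H. unfold r_term, neg_xlnx, Rdiv. rewrite Rmult_1_l, ln_Rinv by exact H. ring.
Qed.

Lemma psi_term_t_of psi r s0 s n : corresp psi r s0 -> s0 <= s -> t_of r s = INR n ->
  psi_term psi n = neg_xlnx (1 - exp (- 2 * r s)) / INR n.
Proof.
  intros Hc Hs E. unfold psi_term. rewrite <- E, (tpsi_t_of psi r s0 s Hc Hs). reflexivity.
Qed.

Lemma le_t_of r x : r x <= 1 -> x <= t_of r x.
Proof. intros H. assert (E := exp_ineq1_le (x - r x)). unfold t_of. lra. Qed.

Definition up_nat (x : R) : nat := Z.to_nat (up x).

Lemma up_nat_spec x : 0 <= x -> x < INR (up_nat x) <= x + 1.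
Proof.
  intros Hx. destruct (archimed x) as [H1 H2]. unfold up_nat.
  rewrite INR_IZR_INZ, Z2Nat.id by (apply le_IZR; lra). lra.
Qed.

Definition block_start (r : R -> R) (k : nat) : nat := up_nat (t_of r (INR k)).

Lemma block_start_spec r k :
  t_of r (INR k) < INR (block_start r k) <= t_of r (INR k) + 1.
Proof. apply up_nat_spec. left; apply exp_pos. Qed.

Section Blocks.

Variables (s0 : R) (psi r : R -> R) (K0 : nat).
Hypothesis r_cont : cont_from s0 r.
Hypothesis r_pos : pos_from s0 r.
Hypothesis r_nonincr : nonincr_from s0 r.
Hypothesis Hc : corresp psi r s0.
Hypothesis K0_ge_s0 : s0 <= INR K0.
Hypothesis K0_ge_10 : 10 <= INR K0.
Hypothesis r_small : forall x, INR K0 <= x -> r x <= / 8.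

Lemma r_small_pos x : INR K0 <= x -> 0 < r x <= / 8.
Proof. intros Hx. split; [apply r_pos; lra | now apply r_small]. Qed.

Lemma t_of_large x : INR K0 <= x -> x <= t_of r x.
Proof. intros Hx. destruct (r_small_pos x Hx). apply le_t_of; lra. Qed.

Lemma t_of_succ_bounds x : INR K0 <= x ->
  2 * t_of r x <= t_of r (x + 1) <= 9 * t_of r x.
Proof.
  intros Hx. set (d := r x - r (x + 1)).
  replace (t_of r (x + 1)) with (exp (1 + d) * t_of r x)
    by (unfold t_of, d; rewrite <- exp_plus; f_equal; ring).
  assert (Hd : 0 <= d <= / 8).
  { assert (r (x + 1) <= r x) by (apply r_nonincr; lra).
    destruct (r_small_pos x Hx), (r_small_pos (x + 1) ltac:(lra)). unfold d; lra. }
  assert (H2 : 2 <= exp (1 + d)) by (apply Rle_trans with (1 + (1 + d)); [lra | apply exp_ineq1_le]).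
  assert (H9 : exp (1 + d) <= 9).
  { apply Rle_trans with (exp 1 * exp 1); [rewrite <- exp_plus; apply exp_le; lra|].
    assert (H3 := exp_le_3). assert (0 < exp 1) by apply exp_pos. nra. }
  assert (0 < t_of r x) by apply exp_pos.
  split; nra.
Qed.

Lemma psi_term_at n : t_of r (INR K0) <= INR n ->
  exists s, INR K0 <= s /\ t_of r s = INR n /\
    psi_term psi n = neg_xlnx (1 - exp (- 2 * r s)) / INR n.
Proof.
  intros Hn.
  assert (t_of r s0 <= INR n) by (apply Rle_trans with (t_of r (INR K0)); [now apply t_of_ge|]; lra).
  destruct (t_of_surj s0 r r_cont r_nonincr (INR n) ltac:(lra)) as [s [Hs E]].
  exists s. split; [|split; [exact E | now apply (psi_term_t_of psi r s0)]].
  apply (sincr_from_le_inv s0 (t_of r)); auto using t_of_sincr. lra.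
Qed.

Lemma psi_term_nonneg n : (block_start r K0 <= n)%nat -> 0 <= psi_term psi n.
Proof.
  intros Hn. apply le_INR in Hn. destruct (block_start_spec r K0) as [HK _].
  destruct (psi_term_at n ltac:(lra)) as [s [Hs [E ->]]].
  assert (0 < INR n) by (assert (HK10 := t_of_large _ (Rle_refl _)); lra).
  destruct (r_small_pos s Hs).
  destruct (one_sub_exp_bounds (r s) ltac:(lra)).
  apply Rdiv_le_0_compat; [apply neg_xlnx_ge0 |]; lra.
Qed.

Lemma block_term_bounds k n : (K0 <= k)%nat ->
  (block_start r k <= n < block_start r (S k))%nat ->
  neg_xlnx (r (INR (S k))) / INR (block_start r (S k)) <= psi_term psi n <=
  2 * neg_xlnx (r (INR k)) / INR (block_start r k).
Proof.
  intros Hk [Hlo Hhi]. rewrite S_INR in *.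
  assert (HKk : INR K0 <= INR k) by now apply le_INR.
  destruct (block_start_spec r k) as [B0lo _].
  destruct (block_start_spec r (S k)) as [_ B1hi]. rewrite S_INR in B1hi.
  apply le_INR in Hlo.
  assert (Hn : INR n + 1 <= INR (block_start r (S k))) by (rewrite <- S_INR; apply le_INR; lia).
  assert (HTk := t_of_large _ HKk).
  assert (t_of r (INR K0) <= t_of r (INR k))
    by (apply (sincr_from_nondecr s0 _ (t_of_sincr s0 r r_nonincr)); lra).
  destruct (psi_term_at n ltac:(lra)) as [s [Hs [E ->]]].
  (* [INR n] lies in [(t_of r k, t_of r (k + 1)]], so its preimage [s] lies in [[k, k + 1]] *)
  assert (Hks : INR k <= s) by (apply (sincr_from_le_inv s0 (t_of r)); auto using t_of_sincr; lra).
  assert (Hsk : s <= INR k + 1) by (apply (sincr_from_le_inv s0 (t_of r)); auto using t_of_sincr; lra).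
  assert (R1 : r (INR k + 1) <= r s) by (apply r_nonincr; lra).
  assert (R2 : r s <= r (INR k)) by (apply r_nonincr; lra).
  destruct (r_small_pos s Hs), (r_small_pos (INR k) HKk), (r_small_pos (INR k + 1) ltac:(lra)).
  destruct (neg_xlnx_one_sub_exp (r s)) as [Q1 Q2]; [lra|].
  assert (E1 := exp_neg1_ge).
  assert (F1 : neg_xlnx (r (INR k + 1)) <= neg_xlnx (r s)) by (apply neg_xlnx_le; lra).
  assert (F2 : neg_xlnx (r s) <= neg_xlnx (r (INR k))) by (apply neg_xlnx_le; lra).
  assert (F0 : 0 <= neg_xlnx (r (INR k + 1))) by (apply neg_xlnx_ge0; lra).
  unfold Rdiv. split.
  - apply Rmult_le_compat; try lra; [left; apply Rinv_0_lt_compat; lra|].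
    apply Rinv_le_contravar; lra.
  - apply Rmult_le_compat; try lra; [left; apply Rinv_0_lt_compat; lra|].
    apply Rinv_le_contravar; lra.
Qed.

Lemma block_start_lt k : (K0 <= k)%nat -> (block_start r k < block_start r (S k))%nat.
Proof.
  intros Hk. apply INR_lt.
  assert (HKk : INR K0 <= INR k) by now apply le_INR.
  destruct (block_start_spec r k) as [_ B0hi].
  destruct (block_start_spec r (S k)) as [B1lo _]. rewrite S_INR in B1lo.
  destruct (t_of_succ_bounds (INR k) HKk).
  assert (HTk := t_of_large _ HKk). lra.
Qed.

Lemma block_sum_bounds k : (K0 <= k)%nat ->
  / 4 * neg_xlnx (r (INR (S k))) <=
    psum (psi_term psi) (block_start r (S k)) - psum (psi_term psi) (block_start r k) <=
  18 * neg_xlnx (r (INR k)).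
Proof.
  intros Hk. assert (HKk : INR K0 <= INR k) by now apply le_INR.
  assert (Hle := Nat.lt_le_incl _ _ (block_start_lt k Hk)).
  assert (Hlo := psum_diff_ge (psi_term psi) _ _ _ Hle
                   (fun n Hn => proj1 (block_term_bounds k n Hk Hn))).
  assert (Hhi := psum_diff_le (psi_term psi) _ _ _ Hle
                   (fun n Hn => proj2 (block_term_bounds k n Hk Hn))).
  rewrite minus_INR in Hlo, Hhi by exact Hle.
  destruct (block_start_spec r k) as [B0lo B0hi].
  destruct (block_start_spec r (S k)) as [B1lo B1hi].
  rewrite S_INR in *.
  set (X := INR (block_start r (S k))) in *. set (Y := INR (block_start r k)) in *.
  set (P1 := neg_xlnx (r (INR k + 1))) in *. set (P0 := neg_xlnx (r (INR k))) in *.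
  destruct (t_of_succ_bounds (INR k) HKk).
  assert (HTk := t_of_large _ HKk).
  destruct (r_small_pos (INR k) HKk), (r_small_pos (INR k + 1) ltac:(lra)).
  assert (0 <= P1) by (apply neg_xlnx_ge0; lra).
  assert (0 <= P0) by (apply neg_xlnx_ge0; lra).
  (* the block has [X - Y] terms, and [X / 4 <= X - Y <= 9 Y] since [t_of r] grows by a
     factor in [[2, 9]] over a unit step *)
  split.
  - assert (X / 4 <= X - Y) by lra.
    assert (P1 / X * (X / 4) <= P1 / X * (X - Y))
      by (apply Rmult_le_compat_l; [apply Rdiv_le_0_compat|]; lra).
    replace (P1 / X * (X / 4)) with (/ 4 * P1) in * by (field; lra). lra.
  - assert (X - Y <= 9 * Y) by lra.
    assert ((X - Y) * (2 * P0 / Y) <= 9 * Y * (2 * P0 / Y))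
      by (apply Rmult_le_compat_r; [apply Rdiv_le_0_compat|]; lra).
    replace (9 * Y * (2 * P0 / Y)) with (18 * P0) in * by (field; lra). lra.
Qed.

End Blocks.

Lemma ex_series_psi_term_iff s0 psi r :
  cont_from s0 r -> pos_from s0 r -> nonincr_from s0 r -> corresp psi r s0 ->
  is_lim r p_infty 0 -> (ex_series (psi_term psi) <-> ex_series (r_term r)).
Proof.
  intros r_cont r_pos r_nonincr Hc Hlim.
  apply is_lim_spec in Hlim. destruct (Hlim (mkposreal (/ 8) ltac:(lra))) as [M HM].
  simpl in HM.
  set (K0 := up_nat (Rmax 10 (Rmax s0 M))).
  assert (HK0 : Rmax 10 (Rmax s0 M) < INR K0)
    by (apply up_nat_spec; apply Rle_trans with 10; [lra | apply Rmax_l]).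
  assert (H10 := Rmax_l 10 (Rmax s0 M)). assert (Hmax := Rmax_r 10 (Rmax s0 M)).
  assert (Hs0 := Rmax_l s0 M). assert (HM0 := Rmax_r s0 M).
  assert (r_small : forall x, INR K0 <= x -> r x <= / 8).
  { intros x Hx. specialize (HM x ltac:(lra)). rewrite Rminus_0_r in HM.
    apply Rabs_def2 in HM. lra. }
  assert (r_term_eq : forall k, (K0 <= k)%nat -> r_term r k = neg_xlnx (r (INR k))).
  { intros k Hk. apply r_term_neg_xlnx, r_pos. apply le_INR in Hk. lra. }
  apply (ex_series_block_iff _ _ (block_start r) K0 (/ 4) 18); try lra.
  - apply (psi_term_nonneg s0 psi r K0); auto; lra.
  - intros k Hk. rewrite r_term_eq by exact Hk. apply le_INR in Hk.
    assert (0 < r (INR k) <= / 8) by (split; [apply r_pos | apply r_small]; lra).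
    apply neg_xlnx_ge0; lra.
  - apply (block_start_lt s0 r K0); auto; lra.
  - intros k Hk. rewrite !r_term_eq by lia.
    apply (block_sum_bounds s0 psi r K0); auto; lra.
Qed.

Theorem lemma4p1 :
  (* psi determines r *)
  (forall (t0 : R) (psi : R -> R),
     0 < t0 -> psi_adm t0 psi ->
     let s0 := / 2 * ln t0 - / 2 * ln (psi t0) in
     exists r : R -> R,
       r_adm s0 r /\ corresp psi r s0 /\
       (forall r' : R -> R, r_adm s0 r' -> corresp psi r' s0 ->
          forall s, s0 <= s -> r' s = r s)) /\
  (* r determines psi *)
  (forall (s0 : R) (r : R -> R),
     r_adm s0 r ->
     let t0 := exp (s0 - r s0) in
     exists psi : R -> R,
       psi_adm t0 psi /\ corresp psi r s0 /\
       (forall psi' : R -> R, psi_adm t0 psi' -> corresp psi' r s0 ->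
          forall t, t0 <= t -> psi' t = psi t)) /\
  (* for corresponding psi and r: limits and series *)
  (forall (t0 s0 : R) (psi r : R -> R),
     0 < t0 -> psi_adm t0 psi -> r_adm s0 r ->
     s0 = / 2 * ln t0 - / 2 * ln (psi t0) ->
     t0 = exp (s0 - r s0) ->
     corresp psi r s0 ->
     (is_lim (fun t => t * psi t) p_infty 1 <-> is_lim r p_infty 0) /\
     (is_lim (fun t => t * psi t) p_infty 1 ->
        (~ ex_series (psi_term psi) <-> ~ ex_series (r_term r)))).
Proof.
  split; [|split].
  - intros t0 psi Ht0 (Pc & Pp & Pn & Pm & Pl) s0.
    destruct (psi_determines_r_exists t0 psi Ht0 Pc Pp Pn Pm Pl) as [r [Hr Hc]].
    exists r. split; [exact Hr | split; [exact Hc|]].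
    intros r' Hr' Hc'. exact (corresp_unique_r t0 psi Ht0 Pp Pn r' r Hr' Hc' Hr Hc).
  - intros s0 r (Rc & Rp & Rn & Rm) t0.
    destruct (r_determines_psi_exists s0 r Rc Rp Rn Rm) as [psi [Hpsi Hc]].
    exists psi. split; [exact Hpsi | split; [exact Hc|]].
    intros psi' _ Hc'. exact (corresp_unique_psi s0 r Rc Rn psi' psi Hc' Hc).
  - intros t0 s0 psi r _ _ (Rc & Rp & Rn & _) _ _ Hc.
    assert (Hlim : is_lim (fun t => t * psi t) p_infty 1 <-> is_lim r p_infty 0).
    { split; [apply (lim_r_of_lim_tpsi s0) | apply (lim_tpsi_of_lim_r s0)]; assumption. }
    split; [exact Hlim|]. intros Hlim1.
    rewrite (ex_series_psi_term_iff s0 psi r Rc Rp Rn Hc (proj1 Hlim Hlim1)). tauto.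
Qed.
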